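(* There is an absolute constant $c>0$ such that, as $n\to\infty$, the fraction of all $2^{n2^n}$ operators $f:\{0,1\}^n\to\{0,1\}^n$ that satisfy $\mathrm{s}(f)\ge c\,n^2$ tends to $1$. In short: for almost all $n$-operators $f$, $\mathrm{s}(f)=\Omega(n^2)$.
   Context: An $n$-operator is a map $f=(f_1,\dots,f_n):\{0,1\}^n\to\{0,1\}^n$. A (general) circuit is a directed acyclic graph with $n$ input nodes $x_1,\dots,x_n$ (of fanin $0$) and $n$ designated output nodes $y_1,\dots,y_n$. Each non-input node may compute an arbitrary boolean function of the values at its in-neighbours, and there is no restriction on fanin or fanout. The circuit computes $f$ if, for every $i$, the function computed at $y_i$ is $f_i$. The size of a circuit is its total number of wires (edges). $\mathrm{s}(f)$ denotes the minimum size of a circuit computing $f$, with no restriction on depth. *)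

From Stdlib Require Import ClassicalDescription.
From mathcomp Require Import all_boot all_order all_algebra.
Set Implicit Arguments. Unset Strict Implicit. Unset Printing Implicit Defensive.

Definition operator (n : nat) := {ffun n.-tuple bool -> n.-tuple bool}.

(* A gate: the list of its in-neighbours (node indices; one wire per entry)
   and an arbitrary boolean function of the values at those in-neighbours. *)
Record gate := Gate { gin : seq nat; gfun : seq bool -> bool }.

(* A general circuit on n inputs: nodes 0..n-1 are the inputs x_1..x_n,
   node n+k is the k-th gate (gates listed in a topological order),
   and outs lists the designated output nodes y_1..y_n. *)
Record circuit := Circuit { gates : seq gate; outs : seq nat }.

(* Well-formedness: acyclicity (every wire into gate k comes from a node
   with smaller index), exactly n outputs, all existing nodes. *)
Definition wf_circuit (n : nat) (C : circuit) : Prop :=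
  (forall k, k < size (gates C) ->
     all (fun j => j < n + k) (gin (nth (Gate [::] (fun _ => false)) (gates C) k)))
  /\ size (outs C) = n
  /\ all (fun j => j < n + size (gates C)) (outs C).

Definition eval_nodes (x : seq bool) (gs : seq gate) : seq bool :=
  foldl (fun vals g => rcons vals (gfun g (map (nth false vals) (gin g)))) x gs.

Definition csize (C : circuit) : nat := sumn (map (fun g => size (gin g)) (gates C)).

Definition computes (n : nat) (C : circuit) (f : operator n) : Prop :=
  wf_circuit n C /\
  forall x : n.-tuple bool,
    map (nth false (eval_nodes x (gates C))) (outs C) = val (f x).

(* "s(f) >= r": every circuit computing f has size at least r. *)
Definition s_ge (n : nat) (f : operator n) (r : rat) : Prop :=
  forall C, computes C f -> (r <= (csize C)%:~R)%R.

Definition pb (P : Prop) : bool :=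
  if excluded_middle_informative P then true else false.

(* Shannon's counting argument.  A circuit with fewer than n^2/4 wires can be
   normalised without adding wires: all gates of fanin 0 are replaced by two
   constant gates, and a gate of fanin at least n by a gate reading the n inputs.
   A normal circuit with at most s wires has at most s + 2 gates, each of fanin
   d <= n, and since n 2^d <= n + d 2^n its truth tables have at most
   s + 2 + s 2^n / n entries.  It is therefore described by fewer than
   n 2^n - n bits, so at most a 2^-n fraction of the n-operators have
   such a circuit. *)

From Stdlib Require Import Classical ClassicalDescription.
From mathcomp Require Import all_boot all_order all_algebra.
From mathcomp Require Import zify.
Set Implicit Arguments. Unset Strict Implicit. Unset Printing Implicit Defensive.
Import Order.TTheory GRing.Theory Num.Theory.

Definition const_gate (b : bool) : gate := Gate [::] (fun _ => b).

Definition wf_gates (n : nat) (gs : seq gate) : Prop :=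
  forall k, k < size gs -> all (fun j => j < n + k) (gin (nth (const_gate false) gs k)).

Lemma eval_nodes_cons (x : seq bool) (g : gate) (gs : seq gate) :
  eval_nodes x (g :: gs) = eval_nodes (rcons x (gfun g (map (nth false x) (gin g)))) gs.
Proof. by []. Qed.

Lemma eval_nodes_cat (x : seq bool) (gs1 gs2 : seq gate) :
  eval_nodes x (gs1 ++ gs2) = eval_nodes (eval_nodes x gs1) gs2.
Proof. by rewrite /eval_nodes foldl_cat. Qed.

Lemma eval_nodes_prefix (x : seq bool) (gs : seq gate) : exists t, eval_nodes x gs = x ++ t.
Proof.
elim: gs x => [|g gs IH] x; first by exists [::]; rewrite cats0.
rewrite eval_nodes_cons; set b := gfun g _; have [t ->] := IH (rcons x b).
by exists (b :: t); rewrite cat_rcons.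
Qed.

Lemma size_eval_nodes (x : seq bool) (gs : seq gate) :
  size (eval_nodes x gs) = size x + size gs.
Proof.
elim: gs x => [|g gs IH] x; first by rewrite addn0.
by rewrite eval_nodes_cons IH size_rcons addSnnS.
Qed.

Lemma nth_eval_nodes_input (x : seq bool) (gs : seq gate) (j : nat) :
  j < size x -> nth false (eval_nodes x gs) j = nth false x j.
Proof. by move=> ltjx; have [t ->] := eval_nodes_prefix x gs; rewrite nth_cat ltjx. Qed.

Lemma nth_eval_nodes_take (x : seq bool) (gs : seq gate) (k j : nat) :
  j < size x + k -> nth false (eval_nodes x gs) j = nth false (eval_nodes x (take k gs)) j.
Proof.
move=> ltj; have [/take_oversize -> //|ltk] := leqP (size gs) k.
rewrite -{1}(cat_take_drop k gs) eval_nodes_cat nth_eval_nodes_input //.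
by rewrite size_eval_nodes size_take ltk.
Qed.

Lemma nth_eval_nodes_gate (x : seq bool) (gs : seq gate) (k : nat) :
  wf_gates (size x) gs -> k < size gs ->
  let g := nth (const_gate false) gs k in
  nth false (eval_nodes x gs) (size x + k) =
  gfun g (map (nth false (eval_nodes x gs)) (gin g)).
Proof.
move=> wf ltk g.
have eq_in : {in gin g, nth false (eval_nodes x gs) =1 nth false (eval_nodes x (take k gs))}.
  by move=> j /(allP (wf k ltk)); apply: nth_eval_nodes_take.
move/eq_in_map: eq_in ->; rewrite -{1}(cat_take_drop k gs) eval_nodes_cat.
rewrite (drop_nth (const_gate false) ltk) eval_nodes_cons.
set y := rcons _ _; have [t ->] := eval_nodes_prefix y (drop k.+1 gs).
have sz : size (eval_nodes x (take k gs)) = size x + k.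
  by rewrite size_eval_nodes size_take ltk.
by rewrite nth_cat /y size_rcons sz ltnSn nth_rcons sz ltnn eqxx.
Qed.

Fixpoint bool_seqs (d : nat) : seq (seq bool) :=
  if d is d'.+1 then [seq b :: v | b <- [:: true; false], v <- bool_seqs d'] else [:: [::]].

Lemma bool_seqsP (v : seq bool) : v \in bool_seqs (size v).
Proof.
elim: v => [|b v IH] //=; rewrite mem_cat; apply/orP.
by case: b; [left | right; rewrite mem_cat; apply/orP; left]; exact: map_f.
Qed.

Lemma size_bool_seqs (d : nat) : size (bool_seqs d) = 2 ^ d.
Proof. by elim: d => //= d IH; rewrite !size_cat !size_map IH addn0 expnS mul2n addnn. Qed.

Definition truth_table (g : gate) : seq bool := map (gfun g) (bool_seqs (size (gin g))).

Definition fanins (gs : seq gate) : seq nat := map (fun g => size (gin g)) gs.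
Definition wires (gs : seq gate) : seq nat := flatten (map gin gs).
Definition tables (gs : seq gate) : seq bool := flatten (map truth_table gs).

Lemma eq_eval_nodes (x : seq bool) (gs1 gs2 : seq gate) :
  map gin gs1 = map gin gs2 -> map truth_table gs1 = map truth_table gs2 ->
  eval_nodes x gs1 = eval_nodes x gs2.
Proof.
elim: gs1 gs2 x => [|g1 gs1 IH] [|g2 gs2] x // [ein1 ein] [etab1 etab].
rewrite !eval_nodes_cons -ein1 (IH gs2) //; congr (eval_nodes (rcons x _) gs2).
move: etab1; rewrite /truth_table -ein1 => /eq_in_map; apply.
by rewrite -(size_map (nth false x)); apply: bool_seqsP.
Qed.

Lemma shape_wires (gs : seq gate) : shape (map gin gs) = fanins gs.
Proof. by rewrite /shape -map_comp. Qed.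

Lemma shape_tables (gs : seq gate) : shape (map truth_table gs) = map (expn 2) (fanins gs).
Proof.
rewrite /shape -!map_comp; apply: eq_map => g /=.
by rewrite size_map size_bool_seqs.
Qed.

Lemma eval_nodes_determined (x : seq bool) (gs1 gs2 : seq gate) :
  fanins gs1 = fanins gs2 -> wires gs1 = wires gs2 -> tables gs1 = tables gs2 ->
  eval_nodes x gs1 = eval_nodes x gs2.
Proof.
move=> efan ewires etables; apply: eq_eval_nodes.
  by rewrite -[LHS]flattenK -[RHS]flattenK !shape_wires efan -/(wires _) ewires.
by rewrite -[LHS]flattenK -[RHS]flattenK !shape_tables efan -/(tables _) etables.
Qed.

Lemma eval_nodes_inputs (x : seq bool) (gs : seq gate) :
  map (nth false (eval_nodes x gs)) (iota 0 (size x)) = x.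
Proof.
rewrite -[RHS](mkseq_nth false x); apply/eq_in_map => j.
by rewrite mem_iota => /andP [_ ltj]; rewrite nth_eval_nodes_input.
Qed.

Section Normalization.

Variables (n : nat) (gs : seq gate).

Local Notation gate_at k := (nth (const_gate false) gs k).
Local Notation fanin k := (size (gin (gate_at k))).

Definition live (k : nat) : bool := 0 < fanin k.

Definition live_gates : seq nat := [seq k <- iota 0 (size gs) | live k].

(* Inputs keep their index, gates of fanin 0 are redirected to the constant
   gates at nodes [n] and [n.+1], and the live gates are packed after them. *)
Definition renum (j : nat) : nat :=
  if j < n then j
  else if live (j - n) then n + (index (j - n) live_gates).+2
  else n + gfun (gate_at (j - n)) [::].

Definition shrink_gate (k : nat) : gate :=
  if n <= fanin k then Gate (iota 0 n) (fun x => nth false (eval_nodes x gs) (n + k))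
  else Gate (map renum (gin (gate_at k))) (gfun (gate_at k)).

Definition normal_gates : seq gate :=
  const_gate false :: const_gate true :: map shrink_gate live_gates.

Lemma mem_live_gates (k : nat) : (k \in live_gates) = live k && (k < size gs).
Proof. by rewrite mem_filter mem_iota. Qed.

Lemma index_live_gates_mono (j k : nat) :
  j \in live_gates -> k \in live_gates -> j < k -> index j live_gates < index k live_gates.
Proof.
move=> jlive klive ltjk; rewrite ltnNge; apply: contraL ltjk => le_kj.
rewrite -leqNgt; apply: (sorted_leq_index leq_trans leqnn) le_kj => //.
exact/sorted_filter/iota_sorted/leq_trans.
Qed.

Lemma renum_gate (j : nat) : n <= j -> live (j - n) -> renum j = n + (index (j - n) live_gates).+2.
Proof. by rewrite /renum ltnNge => -> ->. Qed.

Lemma renum_dead (j : nat) : ~~ live (j - n) -> renum j < n + 2.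
Proof.
rewrite /renum => /negbTE ->; case: ifP => [ltjn|_]; first exact: ltn_addr.
by rewrite ltn_add2l; case: (gfun _ _).
Qed.

Lemma renum_lt_live (k j : nat) :
  k \in live_gates -> j < n + k -> renum j < n + (index k live_gates).+2.
Proof.
move=> klive ltj; have [ltjn|lenj] := ltnP j n; first by rewrite /renum ltjn ltn_addr.
have [jlive|/renum_dead] := boolP (live (j - n)); last by move/leq_trans; apply; rewrite leq_add2l.
have ltk : j - n < k by rewrite ltn_subLR.
have ltsz : k < size gs by move: klive; rewrite mem_live_gates => /andP [].
rewrite renum_gate // ltn_add2l !ltnS index_live_gates_mono //.
by rewrite mem_live_gates jlive (ltn_trans ltk).
Qed.

Lemma renum_lt_size (j : nat) : j < n + size gs -> renum j < n + size normal_gates.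
Proof.
move=> ltj; rewrite /= size_map.
have [ltjn|lenj] := ltnP j n; first by rewrite /renum ltjn ltn_addr.
have [jlive|/renum_dead] := boolP (live (j - n)); last by move/leq_trans; apply; rewrite leq_add2l.
rewrite renum_gate // ltn_add2l !ltnS index_mem mem_live_gates jlive.
by rewrite ltn_subLR.
Qed.

Lemma uniq_live_gates : uniq live_gates.
Proof. exact/filter_uniq/iota_uniq. Qed.

Lemma wf_normal_gates : wf_gates n gs -> wf_gates n normal_gates.
Proof.
move=> wf [|[|i]] //=; rewrite !ltnS size_map => lti.
set k := nth 0 live_gates i; have kin : k \in live_gates by apply: mem_nth.
have ltk : k < size gs by move: kin; rewrite mem_live_gates => /andP [].
rewrite (nth_map 0) // /shrink_gate; case: ifP => _ /=.
  by apply/allP => j; rewrite mem_iota => /andP [_ ltj]; apply: ltn_addr.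
apply/allP => _ /mapP [j jin ->]; rewrite -(index_uniq 0 lti uniq_live_gates).
exact: renum_lt_live (allP (wf k ltk) j jin).
Qed.

Lemma renum_val (x : seq bool) (j : nat) :
  size x = n -> wf_gates n gs -> j < n + size gs ->
  nth false (eval_nodes x normal_gates) (renum j) = nth false (eval_nodes x gs) j.
Proof.
move=> szx wf; elim/ltn_ind: j => j IH ltj.
have wfn : wf_gates (size x) normal_gates by rewrite szx; apply: wf_normal_gates.
have wfo : wf_gates (size x) gs by rewrite szx.
have [ltjn|lenj] := ltnP j n; first by rewrite /renum ltjn !nth_eval_nodes_input ?szx.
set k := j - n; have ej : j = size x + k by rewrite szx subnKC.
have ltk : k < size gs by rewrite -(ltn_add2l n) subnKC.
have [klive|kdead] := boolP (live k); last first.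
  have /size0nil gin0 : fanin k = 0 by apply/eqP; rewrite -leqn0 leqNgt.
  have -> : renum j = n + gfun (gate_at k) [::] by rewrite /renum ltnNge lenj (negbTE kdead).
  rewrite [in RHS]ej (nth_eval_nodes_gate wfo ltk) gin0 -szx.
  by case: (gfun (gate_at k) [::]) => /=; rewrite (nth_eval_nodes_gate wfn).
have kin : k \in live_gates by rewrite mem_live_gates klive.
rewrite renum_gate // -/k -szx (nth_eval_nodes_gate wfn); last by rewrite /= size_map !ltnS index_mem.
rewrite [nth _ normal_gates _]/= (nth_map 0) ?index_mem // nth_index // /shrink_gate.
case: ifP => _; cbn [gin gfun]; first by rewrite -szx eval_nodes_inputs szx subnKC.
rewrite [in RHS]ej (nth_eval_nodes_gate wfo ltk) -map_comp; congr gfun; apply/eq_in_map => i iin /=.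
have lti : i < size x + k by rewrite szx; apply: (allP (wf k ltk)).
apply: IH; first by rewrite (leq_trans lti) // szx subnKC.
by rewrite (ltn_trans lti) // szx ltn_add2l.
Qed.

Lemma sum_live_fanin : \sum_(k <- live_gates) fanin k <= sumn (fanins gs).
Proof.
rewrite sumnE big_map (big_nth (const_gate false)) /index_iota subn0 big_filter big_mkcond.
by apply: leq_sum => k _; case: ifP.
Qed.

Lemma fanins_normal_gates : sumn (fanins normal_gates) <= sumn (fanins gs).
Proof.
apply: leq_trans sum_live_fanin; rewrite /= sumnE !big_map.
apply: leq_sum => k _; rewrite /shrink_gate.
by case: ifP => [le_nk|_] /=; rewrite ?size_iota ?size_map.
Qed.

Lemma size_normal_gates : size normal_gates <= (sumn (fanins gs)).+2.
Proof.
rewrite /= size_map !ltnS -sum1_size; apply: leq_trans sum_live_fanin.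
by rewrite big_seq_cond [X in _ <= X]big_seq_cond; apply: leq_sum => k /andP [];
  rewrite mem_live_gates => /andP [].
Qed.

Lemma fanin_normal_gates : all (fun g => size (gin g) <= n) normal_gates.
Proof.
rewrite /= all_map; apply/allP => k _; rewrite /= /shrink_gate.
by case: ifP => [_|/negbT]; rewrite /= ?size_iota // size_map -ltnNge => /ltnW.
Qed.

End Normalization.

Definition normal_circuit (n : nat) (C : circuit) : circuit :=
  Circuit (normal_gates n (gates C)) (map (renum n (gates C)) (outs C)).

Lemma computes_normal_circuit (n : nat) (C : circuit) (f : operator n) :
  computes C f -> computes (normal_circuit n C) f.
Proof.
case=> [[wf [size_outs outs_lt]] val_f]; split; first split.
- exact: wf_normal_gates.
- split; first by rewrite size_map.
  by apply/allP => _ /mapP [j jin ->]; apply: renum_lt_size; apply: (allP outs_lt).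
- move=> x; rewrite -val_f -map_comp; apply/eq_in_map => j jin.
  exact: renum_val (size_tuple x) wf (allP outs_lt j jin).
Qed.

Definition small_circuit (n s : nat) (C : circuit) : Prop :=
  [/\ csize C <= s, size (gates C) <= s.+2 & all (fun g => size (gin g) <= n) (gates C)].

Lemma small_normal_circuit (n : nat) (C : circuit) :
  small_circuit n (csize C) (normal_circuit n C).
Proof.
split; [exact: fanins_normal_gates | exact: size_normal_gates | exact: fanin_normal_gates].
Qed.

(* A sequence of length at most [L] with entries at most [K], padded to length [L]. *)
Definition seq_code (L K : nat) : finType := ('I_L.+1 * L.-tuple 'I_K.+1)%type.

Definition encode_seq (L K : nat) (s : seq nat) : seq_code L K :=
  (inord (size s), [tuple inord (nth 0 s i) | i < L]).

Lemma card_seq_code_le (L K a b : nat) :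
  L < 2 ^ a -> K < 2 ^ b -> #|{: seq_code L K}| <= 2 ^ (a + b * L).
Proof.
rewrite card_prod card_tuple !card_ord expnD expnM => ltL ltK.
by apply: leq_mul => //; case: L {ltL} => // L; rewrite leq_exp2r.
Qed.

Definition fits (L K : nat) (s : seq nat) : bool := (size s <= L) && all (fun a => a <= K) s.

Lemma encode_seq_inj (L K : nat) (s1 s2 : seq nat) :
  fits L K s1 -> fits L K s2 -> encode_seq L K s1 = encode_seq L K s2 -> s1 = s2.
Proof.
move=> /andP [sz1 le1] /andP [sz2 le2] e; have /= etup := congr1 snd e.
have /= /(congr1 (@nat_of_ord _)) := congr1 fst e; rewrite !inordK ?ltnS // => esz.
apply: (eq_from_nth (x0 := 0) esz) => i lti1.
have ltiL : i < L by apply: leq_trans sz1.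
move/(congr1 (fun t => val (tnth t (Ordinal ltiL)))): etup; rewrite !tnth_mktuple /=.
by rewrite !inordK // ltnS; [apply: (allP le2); rewrite mem_nth -?esz | apply: (allP le1); rewrite mem_nth].
Qed.

(* Convexity of [2 ^ d] on [0, n]. *)
Lemma leq_mul_exp2 (d n : nat) : d <= n -> n * 2 ^ d <= n + d * 2 ^ n.
Proof.
case: d => [|d] le_dn; first by rewrite muln1 leq_addr.
apply: leq_trans (leq_addl _ _); rewrite -(subnKC le_dn) expnD.
have := ltn_expl (n - d.+1) (isT : 1 < 2).
move: (n - d.+1) (2 ^ (n - d.+1)) (2 ^ d.+1) => m Q R ltmQ; nia.
Qed.

Lemma size_tables (gs : seq gate) : size (tables gs) = sumn (map (expn 2) (fanins gs)).
Proof. by rewrite size_flatten shape_tables. Qed.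

Lemma size_tables_le (n : nat) (gs : seq gate) : all (fun g => size (gin g) <= n) gs ->
  n * size (tables gs) <= n * size gs + sumn (fanins gs) * 2 ^ n.
Proof.
rewrite size_tables; elim: gs => [|g gs IH] /=; first by rewrite muln0.
case/andP => /leq_mul_exp2 le_g /IH le_gs; nia.
Qed.

Definition table_bound (n s : nat) : nat := s.+2 + s * 2 ^ n %/ n.

Lemma size_tables_small (n s : nat) (C : circuit) :
  0 < n -> small_circuit n s C -> size (tables (gates C)) <= table_bound n s.
Proof.
move=> n_gt0 [cs sg fi]; rewrite /table_bound -(divnMDl _ _ n_gt0) leq_divRL // mulnC.
apply: leq_trans (size_tables_le fi) _; rewrite [_ * n]mulnC leq_add //.
  by rewrite leq_mul2l sg orbT.
by rewrite leq_mul2r cs orbT.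
Qed.

Lemma wires_lt (n : nat) (C : circuit) :
  wf_circuit n C -> all (fun j => j < n + size (gates C)) (wires (gates C)).
Proof.
case=> wf _; apply/allP => j /flattenP [s sin jin].
have [k + es] := nthP [::] sin; rewrite size_map => ltk.
rewrite -es (nth_map (const_gate false)) // in jin.
by apply: leq_trans (allP (wf k ltk) j jin) _; rewrite leq_add2l ltnW.
Qed.

Definition circuit_code (n s : nat) : finType :=
  (seq_code s.+2 n * seq_code s (n + s.+2) * seq_code (table_bound n s) 1
   * seq_code n (n + s.+2))%type.

Definition encode_circuit (n s : nat) (C : circuit) : circuit_code n s :=
  (encode_seq s.+2 n (fanins (gates C)), encode_seq s (n + s.+2) (wires (gates C)),
   encode_seq (table_bound n s) 1 (map nat_of_bool (tables (gates C))),
   encode_seq n (n + s.+2) (outs C)).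

Lemma small_circuit_fits (n s : nat) (C : circuit) :
  0 < n -> wf_circuit n C -> small_circuit n s C ->
  [/\ fits s.+2 n (fanins (gates C)), fits s (n + s.+2) (wires (gates C)),
      fits (table_bound n s) 1 (map nat_of_bool (tables (gates C)))
    & fits n (n + s.+2) (outs C)].
Proof.
move=> n_gt0 wfC smallC; have [cs sg fi] := smallC; have [_ [size_outs outs_lt]] := wfC.
have lt_bound j : j < n + size (gates C) -> j <= n + s.+2.
  by move=> ltj; rewrite ltnW // (leq_trans ltj) // leq_add2l.
split; apply/andP; split.
- by rewrite size_map.
- by rewrite all_map.
- by rewrite size_flatten shape_wires.
- by apply/allP => j /(allP (wires_lt wfC)) /lt_bound.
- by rewrite size_map size_tables_small.
- by rewrite all_map; apply/allP; case.
- by rewrite size_outs.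
- by apply/allP => j /(allP outs_lt) /lt_bound.
Qed.

Lemma encode_circuit_inj (n s : nat) (C1 C2 : circuit) (f1 f2 : operator n) :
  0 < n -> small_circuit n s C1 -> small_circuit n s C2 -> computes C1 f1 -> computes C2 f2 ->
  encode_circuit n s C1 = encode_circuit n s C2 -> f1 = f2.
Proof.
move=> n_gt0 small1 small2 [wf1 val1] [wf2 val2] e.
have [fan1 wires1 tab1 outs1] := small_circuit_fits n_gt0 wf1 small1.
have [fan2 wires2 tab2 outs2] := small_circuit_fits n_gt0 wf2 small2.
have /= /(encode_seq_inj fan1 fan2) efan := congr1 (fun c => c.1.1.1) e.
have /= /(encode_seq_inj wires1 wires2) ewires := congr1 (fun c => c.1.1.2) e.
have /= /(encode_seq_inj tab1 tab2) /inj_map etab := congr1 (fun c => c.1.2) e.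
have /= /(encode_seq_inj outs1 outs2) eouts := congr1 (fun c => c.2) e.
have {}etab : tables (gates C1) = tables (gates C2) by apply: etab; do 2 case.
apply/ffunP => x; apply: val_inj; rewrite -val1 -val2 eouts.
by rewrite (eval_nodes_determined _ efan ewires etab).
Qed.

Lemma pbP (P : Prop) : reflect P (pb P).
Proof. by rewrite /pb; case: excluded_middle_informative => h; constructor. Qed.

Local Notation hard_operators n :=
  [set f : operator n | pb (s_ge f ((4%:R : rat)^-1 * (n ^ 2)%:R)%R)].

Lemma small_circuit_of_not_s_ge (n : nat) (f : operator n) :
  ~ s_ge f ((4%:R : rat)^-1 * (n ^ 2)%:R)%R ->
  exists C, small_circuit n (n ^ 2 %/ 4) C /\ computes C f.
Proof.
case/not_all_ex_not => C /(imply_to_and (computes C f)) [computesC /negP].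
rewrite -ltNge ltr_pdivlMl ?ltr0n // -natrM ltr_nat => lt_size.
exists (normal_circuit n C); split; last exact: computes_normal_circuit.
have [cs sg fi] := small_normal_circuit n C.
have le_size : csize C <= n ^ 2 %/ 4 by rewrite leq_divRL // mulnC ltnW.
by split; [apply: leq_trans le_size | apply: leq_trans sg _ | ].
Qed.

Lemma card_easy_operators (n : nat) : 0 < n ->
  #|~: hard_operators n| <= #|{: option (circuit_code n (n ^ 2 %/ 4))}|.
Proof.
move=> n_gt0; set s := n ^ 2 %/ 4.
pose coded (f : operator n) (c : circuit_code n s) :=
  exists C, [/\ small_circuit n s C, computes C f & encode_circuit n s C = c].
have pick_code f : f \in ~: hard_operators n ->
    exists2 c, [pick c | pb (coded f c)] = Some c & coded f c.
  rewrite !inE => /pbP/small_circuit_of_not_s_ge [C [smallC computesC]].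
  case: pickP => [c /pbP|none_coded]; first by exists c.
  by case/pbP: (none_coded (encode_circuit n s C)); exists C.
apply: (@leq_card_in _ _ (fun f => [pick c | pb (coded f c)])) => f1 f2.
move=> /pick_code [c1 -> [C1 [small1 comp1 <-]]] /pick_code [c2 -> [C2 [small2 comp2 <-]]].
by move/Some_inj; apply: encode_circuit_inj n_gt0 small1 small2 comp1 comp2.
Qed.

Lemma cube_le_exp2 (n : nat) : 10 <= n -> n ^ 3 <= 2 ^ n.
Proof.
elim: n => // n IH; rewrite leq_eqVlt => /orP [/eqP <- // | lt_n].
rewrite [2 ^ n.+1]expnS; apply: leq_trans _ (leq_mul (leqnn 2) (IH lt_n)); nia.
Qed.

Lemma card_circuit_code_le (n : nat) : 20 <= n ->
  #|{: option (circuit_code n (n ^ 2 %/ 4))}| * 2 ^ n <= 2 ^ (n * 2 ^ n).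
Proof.
move=> n_ge20; set s := n ^ 2 %/ 4; set T := table_bound n s.
have le_s : s * 4 <= n ^ 2 by rewrite -leq_divRL.
have le_T : T * n <= s.+2 * n + s * 2 ^ n.
  by rewrite /T mulnDl leq_add2l; apply: leq_divM.
have le_cube := cube_le_exp2 (leq_trans (isT : 10 <= 20) n_ge20).
have lt_n_exp : n + s.+2 < 2 ^ n.
  by move: (2 ^ n) le_cube => Q le_cube; nia.
have [lt_s2 lt_s lt_n] : [/\ s.+2 < 2 ^ n, s < 2 ^ n & n < 2 ^ n].
  by split; apply: leq_ltn_trans lt_n_exp; lia.
set E := (n + n * s.+2) + (n + n * s) + (T + 1 * T) + (n + n * n).
have card_code : #|{: circuit_code n s}| <= 2 ^ E.
  rewrite 3!card_prod 3!expnD; repeat apply: leq_mul; apply: card_seq_code_le => //.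
  exact: ltn_expl.
apply: leq_trans (_ : 2 ^ (E.+1 + n) <= _).
  rewrite card_option expnD leq_mul2r expnS mul2n -addnn; apply/orP; right.
  by apply: leq_ltn_trans card_code _; rewrite -[X in X < _]addn0 ltn_add2l expn_gt0.
rewrite leq_exp2l // /E.
move: (2 ^ n) le_T le_cube => Q le_T le_cube; nia.
Qed.

Lemma card_easy_operators_le (n : nat) : 20 <= n ->
  #|~: hard_operators n| * 2 ^ n <= #|{: operator n}|.
Proof.
move=> n_ge20; rewrite card_ffun !card_tuple card_bool -expnM.
apply: leq_trans (card_circuit_code_le n_ge20); rewrite leq_mul2r card_easy_operators ?orbT //.
exact: leq_trans n_ge20.
Qed.

Local Open Scope ring_scope.

Lemma ler_card_setC_frac (T : finType) (A : {set T}) (m : nat) (eps : rat) :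
  (0 < #|T|)%N -> (#|~: A| * m <= #|T|)%N -> 0 < eps -> 1 < eps * m%:R ->
  1 - eps <= #|A|%:R / #|T|%:R.
Proof.
move=> T_gt0 le_compl eps_gt0 lt_eps; rewrite ler_pdivlMr ?ltr0n // -(cardsC A) natrD.
rewrite mulrBl mul1r -addrA gerDl subr_le0 -natrD cardsC.
apply: le_trans (_ : #|~: A|%:R * (eps * m%:R) <= _); first by rewrite ler_peMr ?ler0n // ltW.
by rewrite mulrCA ler_pM2l // -natrM ler_nat.
Qed.

Theorem theorem1 :
  exists c : rat, 0 < c /\
    forall eps : rat, 0 < eps ->
      exists N : nat, forall n : nat, (N <= n)%N ->
        1 - eps <=
          (#|[set f : operator n | pb (s_ge f (c * (n ^ 2)%:R))]|%:R
            / #|{: operator n}|%:R : rat).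
Proof.
exists 4%:R^-1; split; first by rewrite invr_gt0 ltr0n.
move=> eps eps_gt0; exists (maxn 20 (Num.Def.archi_bound eps^-1)) => n.
rewrite geq_max => /andP [n_ge20 /upper_nthrootP lt_inv].
apply: (ler_card_setC_frac _ (card_easy_operators_le n_ge20) eps_gt0).
  by rewrite card_ffun card_tuple card_bool !expn_gt0.
by rewrite natrX -[X in X < _](mulfV (lt0r_neq0 eps_gt0)) ltr_pM2l.
Qed.
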